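(* Let $n\ge2$ and let $Q_0\subset\mathbb{R}^n$ be a cube. For $N$ sufficiently large, $$s_N(R_{p,2}\log^\alpha)\lesssim\begin{cases}2^{-Nn(\frac{n+2}{2n}-\frac1p)}N^{-\alpha},& p>\frac{2n}{n+2},\ \alpha\in\mathbb{R},\\ N^{\frac12-\alpha},& p=\frac{2n}{n+2},\ \alpha>\frac12,\end{cases}$$ with implicit constants independent of $N$.
   Context: Cubes have sides parallel to axes; $\mathcal{D}(Q_0)$ is the family of dyadic subcubes of $Q_0$. A countable $\mathcal{Q}=(Q_i)\subset\mathcal{D}(Q_0)$ is sparse if there exist pairwise disjoint measurable $E_{Q_i}\subseteq Q_i$ with $|E_{Q_i}|\ge\frac12|Q_i|$; $S(Q_0)$ is the set of sparse families. For $f\in L^1(Q_0)$, $s_N(f)=\sup_{\mathcal{Q}\in S(Q_0)}\big[\sum_{Q\in\mathcal{Q},\,\ell(Q)\le2^{-(N-1)}\ell(Q_0)}\big(|Q|^{\frac1n-\frac12}\int_Q|f|\big)^2\big]^{1/2}$. The Riesz–Morrey–Tadmor space $R_{p,2}\log^\alpha(Q_0)$ is normed by $\|f\|=\sup\big\{\sum_i\big[(1-(\log|Q_i|)_-)^\alpha|Q_i|^{-1/p'}\int_{Q_i}|f|\big]^2\big\}^{1/2}$, the supremum over all families $(Q_i)$ of pairwise disjoint cubes in $\mathcal{D}(Q_0)$, where $(a)_-=\min\{a,0\}$ and $p'$ is the dual exponent; $s_N(R_{p,2}\log^\alpha)=\sup\{s_N(f):\|f\|_{R_{p,2}\log^\alpha(Q_0)}\le1\}$.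 *)

From HB Require Import structures.
From mathcomp Require Import all_boot all_order all_algebra.
From mathcomp Require Import all_classical all_reals all_analysis.
Set Implicit Arguments. Unset Strict Implicit. Unset Printing Implicit Defensive.
Import Order.TTheory GRing.Theory Num.Theory.
Import numFieldNormedType.Exports.
Local Open Scope classical_set_scope.
Local Open Scope ring_scope.

(* n-dimensional Lebesgue measure on R^n = n.-tuple R (with the library's
   product sigma-algebra of Borel sets), defined as the iterated integral of
   one-dimensional Lebesgue measure (Tonelli / product-measure construction):
   lebn 0 = Dirac mass at the empty tuple,
   lebn (m+1) A = int_R lebn m {t | (x :: t) in A} dx. *)
Fixpoint lebn (R : realType) (n : nat) : set (n.-tuple R) -> \bar R :=
  match n return set (n.-tuple R) -> \bar R with
  | 0 => fun A => (\1_A [tuple] : R)%:E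
  | m.+1 => fun A =>
      (\int[@lebesgue_measure R]_x @lebn R m [set t | A (@cons_tuple m R x t)])%E
  end.
Arguments lebn {R} n.

Section Cubes.
Variables (R : realType) (n : nat).
Implicit Types (a : n.-tuple R) (L : R).

Definition cube a L : set (n.-tuple R) :=
  [set x | forall i : 'I_n, tnth a i <= tnth x i < tnth a i + L].

(* Dyadic subcubes of Q0 are indexed by (k, j), k the generation, and
   j : n.-tuple nat with every j_i < 2^k. *)
Definition dyadic_index (q : nat * n.-tuple nat) : Prop :=
  forall i : 'I_n, (tnth q.2 i < 2 ^ q.1)%N.

Definition dside L (k : nat) : R := L / 2 ^+ k.

Definition dvol L (k : nat) : R := (dside L k) ^+ n.

Definition dcube a L (q : nat * n.-tuple nat) : set (n.-tuple R) :=
  [set x | forall i : 'I_n,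
     tnth a i + dside L q.1 * (tnth q.2 i)%:R <= tnth x i
     < tnth a i + dside L q.1 * (tnth q.2 i).+1%:R].

Definition dyadic_family (F : set (nat * n.-tuple nat)) : Prop :=
  forall q, F q -> dyadic_index q.

Definition disjoint_family a L (F : set (nat * n.-tuple nat)) : Prop :=
  dyadic_family F /\
  forall q q', F q -> F q' -> q <> q' -> dcube a L q `&` dcube a L q' = set0.

Definition sparse_family a L (F : set (nat * n.-tuple nat)) : Prop :=
  dyadic_family F /\
  exists E : nat * n.-tuple nat -> set (n.-tuple R),
    (forall q, F q ->
       [/\ measurable (E q), E q `<=` dcube a L q &
           ((dvol L q.1) / 2)%:E <= lebn n (E q)]%E) /\
    (forall q q', F q -> F q' -> q <> q' -> E q `&` E q' = set0).

Local Open Scope ereal_scope.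

Definition sN a L (N : nat) (f : n.-tuple R -> R) : \bar R :=
  ereal_sup [set poweR
     (\esum_(q in [set q | F q /\
                  (dside L q.1 <= 2 `^ (- (N%:R - 1)) * L)%R])
        (let t := ((dvol L q.1) `^ (n%:R^-1 - 2^-1))%:E *
                  \int[lebn n]_(x in dcube a L q) (`|f x|)%:E in t * t))
     2^-1 | F in sparse_family a L].

(* the norm of the Riesz-Morrey-Tadmor space R_{p,2} log^alpha (Q0);
   |Q|^{-1/p'} = |Q|^{-(1 - 1/p)} *)
Definition rmt_norm a L (p alpha : R) (f : n.-tuple R -> R) : \bar R :=
  ereal_sup [set poweR
     (\esum_(q in F)
        (let t := (((1 - Num.min (ln (dvol L q.1)) 0) `^ alpha) *
                   (dvol L q.1) `^ (- (1 - p^-1)))%:E *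
                  \int[lebn n]_(x in dcube a L q) (`|f x|)%:E in t * t))
     2^-1 | F in disjoint_family a L].

Definition sN_space a L (p alpha : R) (N : nat) : \bar R :=
  ereal_sup [set sN a L N f | f in
    [set f : n.-tuple R -> R | (lebn n).-integrable (cube a L) (EFin \o f)
                              /\ rmt_norm a L p alpha f <= 1]].

End Cubes.

From HB Require Import structures.
From mathcomp Require Import all_boot all_order all_algebra.
From mathcomp Require Import all_classical all_reals all_analysis.
From mathcomp Require Import ring lra.
Import Order.TTheory GRing.Theory Num.Theory.
Import numFieldNormedType.Exports.
Local Open Scope classical_set_scope.
Local Open Scope ring_scope.

Set Implicit Arguments.
Unset Strict Implicit.
Unset Printing Implicit Defensive.

(* Let |Q_k| be the volume of a dyadic cube of generation k and
   theta = (n+2)/(2n) - 1/p.  The normalisation |Q|^(1/n-1/2) of s_N and the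
   normalisation (1 - (log|Q|)_-)^alpha |Q|^(-1/p') of the Riesz-Morrey-Tadmor
   norm differ by the factor w_k = |Q_k|^theta (1 - (log|Q_k|)_-)^(-alpha).
   Cubes of one generation are pairwise disjoint, so generation k contributes
   at most w_k^2 ||f||^2 to any sparse sum, and s_N(R_{p,2} log^alpha)^2 is
   at most the tail sum of the w_k^2 over k >= N-1.  As u_k = -log|Q_k| grows
   linearly in k, eventually w_k = e^(-theta u_k) (1 + u_k)^(-alpha).  For
   theta > 0 the tail is geometric, hence comparable to its first term
   2^(-N n theta) N^(-alpha); for theta = 0 it is the sum of
   (1 + u_k)^(-2 alpha), which telescopes against (1 + u_k)^(1 - 2 alpha)
   and is O(N^(1 - 2 alpha)). *)

Section powR_estimates.
Variable R : realType.
Implicit Types (x y v w h m M g r : R).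

Lemma gt0_powRE x r : 0 < x -> x `^ r = expR (r * ln x).
Proof. by move=> x0; rewrite /powR gt_eqF. Qed.

Lemma ln_ge1BV x : 0 < x -> 1 - x^-1 <= ln x.
Proof.
move=> x0; have := @le_ln1Dx R (x^-1 - 1).
rewrite addrCA subrr addr0 lnV ?posrE// ltrBrDl addrN invr_gt0 => /(_ x0).
lra.
Qed.

Lemma powRN_sub_ge v w g : 0 < v -> v <= w -> 0 <= g ->
  g * (w - v) * w `^ (- (g + 1)) <= v `^ (- g) - w `^ (- g).
Proof.
move=> v0 vw g0; have w0 : 0 < w by apply: lt_le_trans vw.
rewrite !gt0_powRE//; set E := expR (- g * ln w).
have Ev : expR (- g * ln v) = E * expR (g * ln (w / v)).
  by rewrite -expRD ln_div ?posrE//; congr expR; ring.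
have Ew : expR (- (g + 1) * ln w) = E / w.
  by rewrite -[in E / w](lnK w0) -expRB; congr expR; ring.
have ln_wv : 1 - v / w <= ln (w / v).
  by rewrite -[v / w]invf_div ln_ge1BV ?divr_gt0.
have : E * (1 + g * (1 - v / w)) <= E * expR (g * ln (w / v)).
  rewrite ler_pM2l ?expR_gt0//; apply: le_trans (expR_ge1Dx _).
  by rewrite lerD2l ler_wpM2l.
rewrite Ev Ew mulrDr mulr1.
have -> : E * (g * (1 - v / w)) = g * (w - v) * (E / w).
  by field; rewrite gt_eqF.
lra.
Qed.

Lemma powRD_le x h r : 0 < x -> 0 <= h ->
  (x + h) `^ r <= expR (`|r| * h / x) * x `^ r.
Proof.
move=> x0 h0; have xh0 : 0 < x + h by rewrite ltr_wpDr.
rewrite !gt0_powRE// -expRD ler_expR.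
have lnD : ln (x + h) - ln x = ln (1 + h / x).
  by rewrite -ln_div ?posrE// mulrDl divff ?gt_eqF.
have lnD0 : 0 <= ln (1 + h / x) by rewrite ln_ge0// lerDl divr_ge0// ltW.
have lnDh : ln (1 + h / x) <= h / x.
  by rewrite le_ln1Dx// (lt_le_trans _ (divr_ge0 h0 (ltW x0))).
have : r * ln (1 + h / x) <= `|r| * (h / x).
  apply: le_trans (ler_wpM2l (normr_ge0 r) lnDh).
  by apply: ler_wpM2r => //; exact: ler_norm.
rewrite mulrA -lnD; lra.
Qed.

Lemma powR_le_sandwich x y m M r : 0 < m -> 0 < y -> m * y <= x <= M * y ->
  x `^ r <= (m `^ r + M `^ r) * y `^ r.
Proof.
move=> m0 y0 /andP[mx xM].
have x0 : 0 < x by apply: lt_le_trans mx; rewrite mulr_gt0.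
have M0 : 0 < M by rewrite -(pmulr_lgt0 _ y0); apply: lt_le_trans xM.
rewrite -[x](divfK (lt0r_neq0 y0)) powRM ?divr_ge0 ?(ltW x0) ?(ltW y0)//.
apply: ler_wpM2r; first exact: powR_ge0.
have /andP[m' M'] : m <= x / y <= M.
  by rewrite ler_pdivlMr// ler_pdivrMr// mx xM.
rewrite !gt0_powRE ?divr_gt0//.
have [r0|r0] := leP 0 r.
  apply: (@le_trans _ _ (expR (r * ln M))); last by rewrite lerDr expR_ge0.
  by rewrite ler_expR ler_wpM2l// ler_ln ?posrE ?divr_gt0.
apply: (@le_trans _ _ (expR (r * ln m))); last by rewrite lerDl expR_ge0.
by rewrite ler_expR ler_wnM2l ?(ltW r0)// ler_ln ?posrE ?divr_gt0.
Qed.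

Lemma powRN_le_telescope v h g : 1 <= v -> 0 < h -> 0 < g ->
  v `^ (- (g + 1)) <=
  (1 + h) `^ (g + 1) / (g * h) * (v `^ (- g) - (v + h) `^ (- g)).
Proof.
move=> v1 h0 g0; have v0 : 0 < v by apply: lt_le_trans v1.
have vh0 : 0 < v + h by rewrite addr_gt0.
have vvh : v <= v + h by rewrite lerDl ltW.
have := powRN_sub_ge v0 vvh (ltW g0); rewrite addrAC subrr add0r => diff.
have vh : v + h <= (1 + h) * v.
  by rewrite mulrDl mul1r lerD2l ler_peMr ?(ltW h0).
have ln_sub : ln (v + h) <= ln (1 + h) + ln v.
  rewrite -lnM ?posrE ?ltr_wpDr ?(ltW h0)//.
  by rewrite ler_ln ?posrE ?mulr_gt0 ?ltr_wpDr ?(ltW h0).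
have shift : v `^ (- (g + 1)) <= (1 + h) `^ (g + 1) * (v + h) `^ (- (g + 1)).
  rewrite !gt0_powRE ?ltr_wpDr ?(ltW h0)// -expRD ler_expR.
  have := ler_wpM2l (ltW (ltr_wpDl (ltW g0) ltr01 : 0 < g + 1)) ln_sub.
  lra.
apply: le_trans shift _; rewrite -mulrA.
apply: ler_wpM2l; first exact: powR_ge0.
by rewrite ler_pdivlMl ?mulr_gt0// mulrA.
Qed.

End powR_estimates.

Section tail_sums.
Variable R : realType.

Lemma telescope_tail_le (u P : nat -> R) K m :
  (forall k, (K <= k)%N -> u k <= P k - P k.+1) ->
  (forall k, (K <= k)%N -> 0 <= P k) ->
  \sum_(K <= k < m) u k <= P K.
Proof.
move=> uP P0; have [Km|mK] := leqP K m; last by rewrite big_geq ?(ltnW mK)// P0.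
apply: (@le_trans _ _ (\sum_(K <= k < m) (P k - P k.+1))).
  by apply: ler_sum_nat => k /andP[Kk _]; exact: uP.
rewrite (@telescope_sumr_eq _ _ _ (fun k => - P k)) => [|//|k _]; last first.
  by rewrite opprK addrC.
have := P0 m Km; lra.
Qed.

Lemma geometric_tail_le (u : nat -> R) (r : R) K m : 0 <= r < 1 ->
  (forall k, (K <= k)%N -> 0 <= u k /\ u k.+1 <= r * u k) ->
  \sum_(K <= k < m) u k <= u K / (1 - r).
Proof.
move=> /andP[r0 r1] hu.
apply: (telescope_tail_le (P := fun k => u k / (1 - r))).
  move=> k Kk; have [u0 uS] := hu k Kk.
  rewrite -mulrBl ler_pdivlMr ?subr_gt0// mulrBr mulr1 [u k * r]mulrC; lra.
by move=> k Kk; have [u0 _] := hu k Kk; rewrite divr_ge0// subr_ge0 ltW.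
Qed.

End tail_sums.

Section esum_scaling.
Variables (R : realType) (T : choiceType).
Local Open Scope ereal_scope.

Lemma esumZl_le (I : set T) (c : R) (u : T -> \bar R) :
  (0 <= c)%R -> (forall i, 0 <= u i) ->
  \esum_(i in I) (c%:E * u i) <= c%:E * \esum_(i in I) u i.
Proof.
move=> c0 u0; apply: ge_ereal_sup => _ [X [finX XI] <-].
rewrite fsbig_finite //= -ge0_sume_distrr //.
apply: lee_wpmul2l; first by rewrite lee_fin.
rewrite -fsbig_finite //; apply: ereal_sup_ubound; by exists X.
Qed.

End esum_scaling.

Section dyadic_cubes.
Variables (R : realType) (n : nat) (a : n.-tuple R) (L : R).
Hypothesis L0 : 0 < L.

Lemma dside_gt0 k : 0 < dside L k.
Proof. by rewrite divr_gt0 // exprn_gt0. Qed.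

Lemma dvol_gt0 k : 0 < dvol n L k.
Proof. by rewrite exprn_gt0 // dside_gt0. Qed.

Lemma dcube_disjoint q q' : q.1 = q'.1 -> q <> q' ->
  dcube a L q `&` dcube a L q' = set0.
Proof.
case: q q' => [k j] [_ j'] /= <- jj'.
have [i /eqP ji] : exists i, tnth j i != tnth j' i.
  apply/not_existsP => jE; apply: jj'; congr pair; apply: eq_from_tnth => i.
  by apply/eqP/negPn/negP; exact: jE.
apply/seteqP; split => // x [/(_ i)/andP[lo hi] /(_ i)/andP[lo' hi']].
have step (s t : nat) : (s < t)%N -> dside L k * s.+1%:R <= dside L k * t%:R.
  by move=> st; rewrite ler_pM2l ?dside_gt0 ?ler_nat.
by case: (ltngtP (tnth j i) (tnth j' i)) => [/step|/step|//]; lra.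
Qed.

Lemma dside_le_gen N k : dside L k <= 2 `^ (- (N%:R - 1)) * L -> (N.-1 <= k)%N.
Proof.
case: N => [//|N] /=; have -> : N.+1%:R - 1 = N%:R :> R by rewrite mulrSr addrK.
rewrite powRN powR_mulrn// mulrC ler_pM2l// lef_pV2 ?posrE ?exprn_gt0//.
by rewrite (ler_eXn2l (ltr1n R 2)).
Qed.

End dyadic_cubes.

Section weights.
Variables (R : realType) (n : nat) (L p alpha : R).
Hypotheses (n_gt0 : (0 < n)%N) (L0 : 0 < L).

Definition gap : R := (n%:R + 2) / (2 * n%:R) - p^-1.

Definition log_weight k : R := 1 - Num.min (ln (dvol n L k)) 0.

Definition weight k : R := dvol n L k `^ gap * log_weight k `^ (- alpha).

Lemma gap_gt0 : 2 * n%:R / (n%:R + 2) < p -> 0 < gap.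
Proof.
move=> hp; have n0 : 0 < n%:R :> R by rewrite ltr0n.
have q0 : 0 < 2 * n%:R / (n%:R + 2) :> R.
  by rewrite divr_gt0 ?mulr_gt0 ?addr_gt0.
by rewrite /gap subr_gt0 -invf_div ltf_pV2 ?posrE ?(lt_trans q0 hp).
Qed.

Lemma gap_eq0 : p = 2 * n%:R / (n%:R + 2) -> gap = 0.
Proof. by rewrite /gap => ->; rewrite invf_div subrr. Qed.

Lemma weight_ge0 k : 0 <= weight k.
Proof. exact: mulr_ge0 (powR_ge0 _ _) (powR_ge0 _ _). Qed.

Lemma log_weight_ge1 k : 1 <= log_weight k.
Proof. by rewrite /log_weight lerDl oppr_ge0 ge_min lexx orbT. Qed.

Lemma powR_dvol_split k : dvol n L k `^ (n%:R^-1 - 2^-1) =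
  weight k * (log_weight k `^ alpha * dvol n L k `^ (- (1 - p^-1))).
Proof.
have w0 : 0 < log_weight k by apply: lt_le_trans (log_weight_ge1 k).
rewrite /weight powRN -mulrA mulKf ?gt_eqF ?powR_gt0// -powRD; last first.
  by apply/implyP => _; apply: lt0r_neq0; exact: dvol_gt0.
suff -> : gap - (1 - p^-1) = n%:R^-1 - 2^-1 by [].
by rewrite /gap; move: p^-1 => q; field; rewrite pnatr_eq0 -lt0n.
Qed.

End weights.

Section sN_space_reduction.
Variables (R : realType) (n : nat) (a : n.-tuple R) (L p alpha : R).
Hypotheses (n_gt0 : (0 < n)%N) (L0 : 0 < L).
Local Open Scope ereal_scope.

Definition sN_term (f : n.-tuple R -> R) q : \bar R :=
  let t := ((dvol n L q.1) `^ (n%:R^-1 - 2^-1))%:E *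
           \int[lebn n]_(x in dcube a L q) (`|f x|)%:E in t * t.

Definition rmt_term (f : n.-tuple R -> R) q : \bar R :=
  let t := (log_weight n L q.1 `^ alpha * dvol n L q.1 `^ (- (1 - p^-1)))%:E *
           \int[lebn n]_(x in dcube a L q) (`|f x|)%:E in t * t.

Lemma rmt_term_ge0 f q : 0 <= rmt_term f q.
Proof. exact: sqre_ge0. Qed.

Lemma sN_termE f q :
  sN_term f q = (weight n L p alpha q.1 ^+ 2)%:E * rmt_term f q.
Proof.
rewrite /sN_term /rmt_term /= (powR_dvol_split p alpha n_gt0 L0).
set w := weight _ _ _ _ _; set B := (log_weight _ _ _ `^ _ * _)%R.
set I := integral _ _ _.
have -> : (w * B)%:E * I = w%:E * (B%:E * I) by rewrite EFinM muleA.
by rewrite muleACA -EFinM expr2.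
Qed.

Lemma rmt_term_esum_le1 f J : disjoint_family a L J ->
  rmt_norm a L p alpha f <= 1 -> \esum_(q in J) rmt_term f q <= 1.
Proof.
move=> Jdisj f1; have J0 : 0 <= \esum_(q in J) rmt_term f q.
  by apply: esum_ge0 => q _; exact: rmt_term_ge0.
have sqrte1 : sqrte 1 = 1 :> \bar R by rewrite /= sqrtr1.
rewrite -(lee_sqrt _ lee01) sqrte1 -poweR12_sqrt//.
by apply: le_trans f1; apply: ereal_sup_ubound; exists J.
Qed.

Lemma generation_esum_le f J k : rmt_norm a L p alpha f <= 1 ->
  dyadic_family J -> (forall q, J q -> q.1 = k) ->
  \esum_(q in J) sN_term f q <= (weight n L p alpha k ^+ 2)%:E.
Proof.
move=> f1 Jdy Jk.
have sNJ q : J q -> sN_term f q = (weight n L p alpha k ^+ 2)%:E * rmt_term f q.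
  by move=> /Jk <-; exact: sN_termE.
rewrite (eq_esum sNJ).
apply: le_trans (esumZl_le _ (sqr_ge0 _) (@rmt_term_ge0 f)) _.
rewrite -[leRHS]mule1 lee_wpmul2l ?lee_fin ?sqr_ge0//.
apply: rmt_term_esum_le1 f1; split=> // q q' Jq Jq'.
by apply: dcube_disjoint; rewrite ?Jk.
Qed.

Lemma sN_space_le N (B : R) : (0 <= B)%R ->
  (forall m, \sum_(N.-1 <= k < m) weight n L p alpha k ^+ 2 <= B ^+ 2)%R ->
  sN_space a L p alpha N <= B%:E.
Proof.
move=> B0 hB; apply: ge_ereal_sup => _ [f [_ f1] <-].
apply: ge_ereal_sup => _ [F [Fdy _] <-].
set F' := [set q | _ /\ _].
rewrite poweR12_sqrt; last by apply: esum_ge0 => q _; exact: sqre_ge0.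
have BE0 : 0 <= B%:E by rewrite lee_fin.
rewrite -(gee0_abs BE0) -sqrte_sqr lee_sqrt ?sqre_ge0// -EFin_expe.
pose J k := [set q | F' q /\ q.1 = k].
have -> : F' = \bigcup_(k in [set k | (N.-1 <= k)%N]) J k.
  apply/seteqP; split=> [q F'q|q [k _ []]//]; exists q.1 => //=.
  exact: dside_le_gen L0 _ _ F'q.2.
rewrite esum_bigcupT; last 2 first.
- by move=> i j _ _ [q [[_ <-] [_ <-]]].
- by move=> q; exact: sqre_ge0.
apply: (@le_trans _ _
  (\esum_(k in [set k | (N.-1 <= k)%N]) (weight n L p alpha k ^+ 2)%:E)).
  apply: le_esum => k _.
  by apply: generation_esum_le f1 _ _ => [q [[/Fdy]]|q []].
rewrite -nneseries_esum => [|k _]; last by rewrite lee_fin sqr_ge0.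
apply: lime_le.
  by apply: is_cvg_nneseries_cond => k _; rewrite lee_fin sqr_ge0.
apply: nearW => m; rewrite sumEFin lee_fin big_mkord.
by apply: le_trans (hB m); rewrite big_geq_mkord.
Qed.

End sN_space_reduction.

Section weight_estimates.
Variables (R : realType) (n : nat) (L p alpha : R).
Hypotheses (n_gt0 : (0 < n)%N) (L0 : 0 < L).

Let c : R := n%:R * ln 2.
Let b : R := n%:R * ln L.
Local Notation log_weight := (log_weight n L).
Local Notation weight := (weight n L p alpha).
Local Notation gap := (@gap R n p).

Let c_gt0 : 0 < c.
Proof. by rewrite mulr_gt0 ?ltr0n// ln_gt0// ltr1n. Qed.

Lemma ln_dvol k : ln (dvol n L k) = b - k%:R * c.
Proof.
rewrite lnXn ?dside_gt0// ln_div ?posrE ?exprn_gt0// lnXn//.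
by rewrite -(mulr_natl _ n) -(mulr_natl (ln 2) k) /b /c; ring.
Qed.

Lemma powR_dvol k r : dvol n L k `^ r = expR (r * (b - k%:R * c)).
Proof. by rewrite gt0_powRE ?dvol_gt0// ln_dvol. Qed.

Lemma log_weightE k : log_weight k = 1 + Num.max (k%:R * c - b) 0.
Proof. by rewrite /log_weight ln_dvol oppr_min opprB oppr0. Qed.

Lemma log_weight_le k l : (k <= l)%N -> log_weight k <= log_weight l.
Proof.
move=> kl; rewrite !log_weightE lerD2l le_max2// lerD2r.
by rewrite ler_wpM2r ?ler_nat ?(ltW c_gt0).
Qed.

Lemma log_weightS k : log_weight k <= log_weight k.+1 <= log_weight k + c.
Proof.
rewrite !log_weightE -natr1 mulrDl mul1r addrAC.
move: (k%:R * c - b) => x; have c0 := c_gt0.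
have [x0|x0] := lerP x 0; have [xc0|xc0] := lerP (x + c) 0;
  rewrite ?(max_r x0) ?(max_l (ltW x0)) ?(max_r xc0) ?(max_l (ltW xc0));
  apply/andP; split; lra.
Qed.

Lemma log_weightS_eq k : b <= k%:R * c -> log_weight k.+1 = log_weight k + c.
Proof.
move=> bk; rewrite !log_weightE !max_l ?subr_ge0//; last first.
  by apply: le_trans bk _; rewrite ler_wpM2r ?(ltW c_gt0) ?ler_nat.
by rewrite -natr1; ring.
Qed.

Lemma near_pred_mul_ge (X : R) : \forall N \near \oo, X <= N.-1%:R * c.
Proof.
apply: filterS (nbhs_infty_ger (X / c + 1)) => N XN.
rewrite -ler_pdivrMr//; apply: le_trans (_ : N%:R - 1 <= _); first lra.
by case: N {XN} => [|N] /=; rewrite ?sub0r ?lerN10// -natr1 addrK.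
Qed.

Lemma near_log_weight_pred : \forall N \near \oo,
  c / 2 * N%:R <= log_weight N.-1 <= 2 * c * N%:R.
Proof.
apply: filterS2 (nbhs_infty_ge 1) (near_pred_mul_ge (2 * `|b| + c + 2)).
move=> [//|N] _ /= hN; have c0 := c_gt0.
have := ler_norm b; have := ler_norm (- b); rewrite normrN => nb nb'.
rewrite log_weightE max_l ?subr_ge0; last by lra.
by rewrite -[N.+1%:R]natr1; apply/andP; split; lra.
Qed.

Lemma near_log_weight_pred_powR r : \forall N \near \oo,
  log_weight N.-1 `^ r <= ((c / 2) `^ r + (2 * c) `^ r) * N%:R `^ r.
Proof.
apply: filterS near_log_weight_pred => N lwN.
have N0 : 0 < 2 * c * N%:R.
  apply: lt_le_trans (andP lwN).2.
  exact: lt_le_trans (log_weight_ge1 n L N.-1).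
apply: powR_le_sandwich lwN; first by rewrite divr_gt0 ?c_gt0.
by move: N0; rewrite pmulr_rgt0// mulr_gt0 ?c_gt0.
Qed.

Lemma weight_ratio k : 0 < gap -> 2 * `|alpha| / gap <= log_weight k ->
  weight k.+1 <= expR (- (gap * c / 2)) * weight k.
Proof.
move=> g0 lwk; have lw0 : 0 < log_weight k.
  exact: lt_le_trans ltr01 (log_weight_ge1 n L k).
have /andP[lwS1 lwS2] := log_weightS k.
set h := log_weight k.+1 - log_weight k.
have h0 : 0 <= h by rewrite subr_ge0.
have small : `|alpha| * h / log_weight k <= gap * c / 2.
  rewrite ler_pdivrMr// in lwk; rewrite ler_pdivrMr//.
  have : `|alpha| * h <= `|alpha| * c by rewrite ler_wpM2l// /h; lra.
  have : `|alpha| * c <= log_weight k * gap / 2 * c.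
    by rewrite ler_wpM2r ?(ltW c_gt0)//; lra.
  lra.
have lwS : log_weight k.+1 = log_weight k + h by rewrite /h addrC subrK.
rewrite /weight !powR_dvol lwS.
apply: le_trans (ler_wpM2l (expR_ge0 _) (powRD_le _ lw0 h0)) _.
rewrite normrN !mulrA -!expRD.
rewrite ler_wpM2r ?powR_ge0// ler_expR -[k.+1%:R]natr1.
by move: small; rewrite /c; lra.
Qed.

Lemma weight_sq_tail_gap_gt0 K m :
  0 < gap -> 2 * `|alpha| / gap <= log_weight K ->
  \sum_(K <= k < m) weight k ^+ 2 <= weight K ^+ 2 / (1 - expR (- (gap * c))).
Proof.
move=> g0 lwK; apply: geometric_tail_le.
  by rewrite expR_ge0 expR_lt1 oppr_lt0 mulr_gt0 ?c_gt0.
move=> k Kk; split; first exact: sqr_ge0.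
have ratio := weight_ratio g0 (le_trans lwK (log_weight_le Kk)).
have -> : expR (- (gap * c)) = expR (- (gap * c / 2)) ^+ 2.
  by rewrite -expRM_natl; congr expR; field.
rewrite -exprMn ler_pXn2r ?nnegrE ?weight_ge0//.
by rewrite mulr_ge0 ?expR_ge0 ?weight_ge0.
Qed.

Lemma near_weight_pred_le : \forall N \near \oo, weight N.-1 <=
  expR (gap * (b + c)) * 2 `^ (- (N%:R * n%:R * gap)) *
  (((c / 2) `^ (- alpha) + (2 * c) `^ (- alpha)) * N%:R `^ (- alpha)).
Proof.
apply: filterS2 (nbhs_infty_ge 1) (near_log_weight_pred_powR (- alpha)).
move=> [//|N] _ /= lwN; rewrite /weight powR_dvol -mulrA.
have -> : expR (gap * (b - N%:R * c)) =
    expR (gap * (b + c)) * 2 `^ (- (N.+1%:R * n%:R * gap)).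
  by rewrite gt0_powRE// -expRD -[N.+1%:R]natr1 /c; congr expR; ring.
by rewrite -mulrA ler_wpM2l ?expR_ge0// ler_wpM2l ?powR_ge0.
Qed.

Lemma near_weight_sq_tail_gap_gt0 : 0 < gap -> exists2 C, 0 < C &
  \forall N \near \oo, forall m, \sum_(N.-1 <= k < m) weight k ^+ 2 <=
    (C * 2 `^ (- (N%:R * n%:R * gap)) * N%:R `^ (- alpha)) ^+ 2.
Proof.
move=> g0; have c0 := c_gt0; set q := 1 - expR (- (gap * c)).
have q0 : 0 < q by rewrite subr_gt0 expR_lt1 oppr_lt0 mulr_gt0 ?c_gt0.
set E := expR (gap * (b + c)).
set Kc := (c / 2) `^ (- alpha) + (2 * c) `^ (- alpha).
have Kc0 : 0 < Kc.
  have c2 : 0 < c / 2 by rewrite divr_gt0.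
  have c2' : 0 < 2 * c by rewrite mulr_gt0.
  by rewrite /Kc addr_gt0 ?powR_gt0.
exists (Num.sqrt q^-1 * E * Kc).
  by rewrite !mulr_gt0 ?expR_gt0// sqrtr_gt0 invr_gt0.
near=> N => m.
have lwN : 2 * `|alpha| / gap <= log_weight N.-1.
  have /andP[lw_lo _] : c / 2 * N%:R <= log_weight N.-1 <= 2 * c * N%:R.
    by near: N; exact: near_log_weight_pred.
  have NX : 4 * `|alpha| / (gap * c) <= N%:R by near: N; exact: nbhs_infty_ger.
  apply: le_trans lw_lo; rewrite ler_pdivrMr ?(mulr_gt0 g0 c0)// in NX.
  rewrite ler_pdivrMr//; lra.
have wN : weight N.-1 <=
    E * 2 `^ (- (N%:R * n%:R * gap)) * (Kc * N%:R `^ (- alpha)).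
  by near: N; exact: near_weight_pred_le.
apply: le_trans (weight_sq_tail_gap_gt0 m g0 lwN) _.
set T := 2 `^ _; set P := N%:R `^ _.
have -> : (Num.sqrt q^-1 * E * Kc * T * P) ^+ 2 = (E * T * (Kc * P)) ^+ 2 / q.
  by rewrite !exprMn sqr_sqrtr ?invr_ge0 ?(ltW q0)//; ring.
rewrite ler_wpM2r ?invr_ge0 ?(ltW q0)// ler_pXn2r ?nnegrE ?weight_ge0//.
by rewrite !mulr_ge0 ?expR_ge0 ?powR_ge0 ?(ltW Kc0).
Unshelve. all: by end_near.
Qed.

Lemma weight_sq_tail_gap0 K m : gap = 0 -> 2^-1 < alpha -> b <= K%:R * c ->
  \sum_(K <= k < m) weight k ^+ 2 <=
  (1 + c) `^ (2 * alpha) / ((2 * alpha - 1) * c) *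
  log_weight K `^ (- (2 * alpha - 1)).
Proof.
move=> g0 a_half bK; have c0 := c_gt0; set g := 2 * alpha - 1.
have g_gt0 : 0 < g by rewrite /g; lra.
have -> : 2 * alpha = g + 1 by rewrite /g; ring.
apply: (telescope_tail_le
  (P := fun k => (1 + c) `^ (g + 1) / (g * c) * log_weight k `^ (- g)))
  => [k Kk|k _]; last first.
  apply: mulr_ge0 (powR_ge0 _ _).
  exact: divr_ge0 (powR_ge0 _ _) (ltW (mulr_gt0 g_gt0 c0)).
have bk : b <= k%:R * c.
  by apply: le_trans bK _; rewrite ler_wpM2r ?(ltW c0) ?ler_nat.
rewrite /weight g0 powRr0 mul1r -powR_mulrn ?powR_ge0// -powRrM.
have -> : - alpha * 2%:R = - (g + 1) by rewrite /g; ring.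
rewrite log_weightS_eq// -mulrBr.
by apply: powRN_le_telescope; rewrite ?log_weight_ge1.
Qed.

Lemma near_weight_sq_tail_gap0 : gap = 0 -> 2^-1 < alpha -> exists2 C, 0 < C &
  \forall N \near \oo, forall m,
    \sum_(N.-1 <= k < m) weight k ^+ 2 <= (C * N%:R `^ (2^-1 - alpha)) ^+ 2.
Proof.
move=> g0 a_half; have c0 := c_gt0.
set D := (1 + c) `^ (2 * alpha) / ((2 * alpha - 1) * c).
set Kc := (c / 2) `^ (- (2 * alpha - 1)) + (2 * c) `^ (- (2 * alpha - 1)).
have D0 : 0 < D.
  by rewrite /D divr_gt0 ?powR_gt0 ?(mulr_gt0 _ c0)//; lra.
have Kc0 : 0 < Kc.
  have c2 : 0 < c / 2 by rewrite divr_gt0.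
  have c2' : 0 < 2 * c by rewrite mulr_gt0.
  by rewrite /Kc addr_gt0 ?powR_gt0.
exists (Num.sqrt (D * Kc)); first by rewrite sqrtr_gt0 mulr_gt0.
near=> N => m.
have bN : b <= N.-1%:R * c by near: N; exact: near_pred_mul_ge.
apply: le_trans (weight_sq_tail_gap0 m g0 a_half bN) _.
rewrite exprMn (sqr_sqrtr (mulr_ge0 (ltW D0) (ltW Kc0))) -/D.
rewrite -[X in _ <= X]mulrA ler_pM2l//.
rewrite -powR_mulrn ?powR_ge0// -powRrM.
have -> : (2^-1 - alpha) * 2%:R = - (2 * alpha - 1) by field.
by near: N; exact: near_log_weight_pred_powR.
Unshelve. all: by end_near.
Qed.

End weight_estimates.

Theorem proposition5p3 (R : realType) (n : nat) (a : n.-tuple R) (L p alpha : R) :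
  (2 <= n)%N -> 0 < L ->
  ((2 * n%:R / (n%:R + 2) < p) ->
     exists C : R, 0 < C /\ exists N0 : nat, forall N : nat, (N0 <= N)%N ->
       (sN_space a L p alpha N <=
        (C * 2 `^ (- (N%:R * n%:R * ((n%:R + 2) / (2 * n%:R) - p^-1)))
           * N%:R `^ (- alpha))%:E)%E)
  /\
  ((p = 2 * n%:R / (n%:R + 2)) -> 2^-1 < alpha ->
     exists C : R, 0 < C /\ exists N0 : nat, forall N : nat, (N0 <= N)%N ->
       (sN_space a L p alpha N <= (C * N%:R `^ (2^-1 - alpha))%:E)%E).
Proof.
move=> n2 L0; have n_gt0 : (0 < n)%N by apply: leq_trans n2.
split=> [p_gt | p_eq a_gt].
- have [C C0 [N0 _ tail]] :=
    near_weight_sq_tail_gap_gt0 alpha n_gt0 L0 (gap_gt0 n_gt0 p_gt).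
  exists C; split=> //; exists N0 => N /tail bound.
  apply: (sN_space_le a n_gt0 L0 _ bound).
  by rewrite !mulr_ge0 ?powR_ge0 ?(ltW C0).
- have [C C0 [N0 _ tail]] :=
    near_weight_sq_tail_gap0 n_gt0 L0 (gap_eq0 p_eq) a_gt.
  exists C; split=> //; exists N0 => N /tail bound.
  apply: (sN_space_le a n_gt0 L0 _ bound).
  by rewrite mulr_ge0 ?powR_ge0 ?(ltW C0).
Qed.
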